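(* Let $\{\rho_\theta\}_{\theta\in\Theta}$ be a differentiable family of density operators on a $d$-dimensional Hilbert space. For $\varepsilon\in(0,1)$ set $\rho_\theta^\varepsilon:=(1-\varepsilon)\rho_\theta+\varepsilon\, I/d$. Then $$I_F(\theta;\{\rho_\theta\}_\theta)=\lim_{\varepsilon\to 0}I_F(\theta;\{\rho^\varepsilon_\theta\}_\theta),$$ including the case where the left-hand side equals $+\infty$.
   Context: All Hilbert spaces are finite-dimensional; $\Theta\subseteq\mathbb{R}$ is the parameter set and $\partial_\theta$ denotes the derivative with respect to $\theta$. For a differentiable family $\{\rho_\theta\}_\theta$ of density operators with spectral decomposition $\rho_\theta=\sum_j\lambda^j_\theta|\psi^j_\theta\rangle\langle\psi^j_\theta|$ (including zero eigenvalues), let $\Pi^\perp_{\rho_\theta}$ be the projection onto the kernel of $\rho_\theta$. The SLD Fisher information is $I_F(\theta;\{\rho_\theta\}_\theta)=2\sum_{j,k:\lambda^j_\theta+\lambda^k_\theta>0}\frac{|\langle\psi^j_\theta|(\partial_\theta\rho_\theta)|\psi^k_\theta\rangle|^2}{\lambda^j_\theta+\lambda^k_\theta}$ if $\Pi^\perp_{\rho_\theta}(\partial_\theta\rho_\theta)\Pi^\perp_{\rho_\theta}=0$, and $+\infty$ otherwise. *)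

From HB Require Import structures.
From mathcomp Require Import all_boot all_order all_algebra.
From mathcomp Require Import spectral sesquilinear.
From mathcomp Require Import complex.
From mathcomp Require Import all_classical all_reals all_analysis.
Set Implicit Arguments. Unset Strict Implicit. Unset Printing Implicit Defensive.
Import Order.TTheory GRing.Theory Num.Theory.
Import numFieldNormedType.Exports.
Local Open Scope ring_scope.

Section QFI.
Variable R : realType.
Local Notation C := (R[i]).

Definition adjmx (m n : nat) (A : 'M[C]_(m, n)) : 'M[C]_(n, m) :=
  (map_mx (@Num.conj C) A)^T.

(** Density operator on C^d: Hermitian, positive semidefinite, trace one.
    (Vectors are row vectors v; <x|rho|x> for x = v^dagger is v rho v^dagger.) *)
Definition density_op (d : nat) (rho : 'M[C]_d) : Prop :=
  [/\ adjmx rho = rho,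
      (forall v : 'rV[C]_d, 0 <= (v *m rho *m adjmx v) 0 0) &
      \tr rho = 1].

Definition mx_derivable (d : nat) (rho : R -> 'M[C]_d) (t : R) : Prop :=
  forall i j : 'I_d,
    derivable (fun s : R => complex.Re (rho s i j)) t 1 /\
    derivable (fun s : R => complex.Im (rho s i j)) t 1.

Definition mx_derive (d : nat) (rho : R -> 'M[C]_d) (t : R) : 'M[C]_d :=
  \matrix_(i, j) Complex (derive1 (fun s : R => complex.Re (rho s i j)) t)
                         (derive1 (fun s : R => complex.Im (rho s i j)) t).

(** Spectral decomposition rho = sum_j lam_j |psi_j><psi_j| (zero eigenvalues
    included), taken from the library: rho = U^dagger diag(lam) U with U
    unitary, so that <psi_j| is the j-th row of U. *)
Definition eigU (d : nat) (rho : 'M[C]_d) : 'M[C]_d := spectralmx rho.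
Definition eigval (d : nat) (rho : 'M[C]_d) (j : 'I_d) : R :=
  complex.Re (spectral_diag rho 0 j).

Definition ker_proj (d : nat) (rho : 'M[C]_d) : 'M[C]_d :=
  adjmx (eigU rho) *m diag_mx (\row_j ((eigval rho j == 0)%:R : C)) *m eigU rho.

Definition SLD_fisher (d : nat) (rho drho : 'M[C]_d) : \bar R :=
  let M := eigU rho *m drho *m adjmx (eigU rho) in   (* M j k = <psi_j|drho|psi_k> *)
  if ker_proj rho *m drho *m ker_proj rho == 0 then
    (2 * \sum_(j < d) \sum_(k < d | 0 < eigval rho j + eigval rho k)
       (complex.Re `|M j k| ^+ 2 / (eigval rho j + eigval rho k)))%:E
  else +oo%E.

Definition fisher_info (d : nat) (rho : R -> 'M[C]_d) (theta : R) : \bar R :=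
  SLD_fisher (rho theta) (mx_derive rho theta).

Definition depolarize (d : nat) (eps : R) (rho : 'M[C]_d) : 'M[C]_d :=
  Complex (1 - eps) 0 *: rho + Complex (eps / d%:R) 0 *: 1%:M.

End QFI.

From HB Require Import structures.
From mathcomp Require Import all_boot all_order all_algebra.
From mathcomp Require Import spectral sesquilinear complex.
From mathcomp Require Import all_classical all_reals all_analysis.
From mathcomp Require Import ring lra.
Import Order.TTheory GRing.Theory Num.Theory.
Import numFieldNormedType.Exports.
Local Open Scope ring_scope.
Local Open Scope sesquilinear_scope.
Local Open Scope complex_scope.
Set Implicit Arguments. Unset Strict Implicit.

(** Let [r = U^* diag(lam) U] be the spectral decomposition of [rho_theta] and
  [M = U (d rho) U^*] the derivative in its eigenbasis.  The depolarized family
  [rho^eps = (1 - eps) rho + eps I/d] has derivative [(1 - eps) d rho] and is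
  diagonal in the same basis, with eigenvalues [(1 - eps) lam_j + eps/d].  The
  definition [SLD_fisher], however, reads the eigenbasis of [rho^eps] off the
  library's own spectral decomposition, which need not be [U].  For a positive
  definite matrix [A] the Fisher form [sum_(j,k) |M_jk|^2/(l_j + l_k)] does not
  depend on the eigenbasis: it equals [tr (D^* L)] for the unique solution [L] of
  the Lyapunov equation [A L + L A = D].  Hence for [0 < eps < 1]
    [I_F(rho^eps) = 2 sum_(j,k) (1-eps)^2 |M_jk|^2 / ((1-eps)(lam_j+lam_k) + 2eps/d)].
  As [eps -> 0], the terms with [lam_j + lam_k > 0] converge to those of
  [I_F(rho)]; if the kernel condition [Pi (d rho) Pi = 0] holds the other terms
  vanish, and otherwise some [M_jk != 0] with [lam_j = lam_k = 0] yields a term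
  of order [1/eps], so the limit is [+oo]. *)

Section UnitaryConjugation.
Variable R : realType.
Local Notation C := (R[i]).

Lemma adjmxE m n (A : 'M[C]_(m, n)) : adjmx A = A^t*.
Proof. by rewrite /adjmx map_trmx. Qed.

Lemma adjmxK m n (A : 'M[C]_(m, n)) : adjmx (adjmx A) = A.
Proof. by rewrite !adjmxE trmxCK. Qed.

Lemma adjmxM m n p (A : 'M[C]_(m, n)) (B : 'M[C]_(n, p)) :
  adjmx (A *m B) = adjmx B *m adjmx A.
Proof. by rewrite /adjmx map_mxM trmx_mul. Qed.

Lemma adjmxD m n (A B : 'M[C]_(m, n)) : adjmx (A + B) = adjmx A + adjmx B.
Proof. by rewrite /adjmx map_mxD linearD. Qed.

Lemma adjmxZ m n a (A : 'M[C]_(m, n)) : adjmx (a *: A) = a^* *: adjmx A.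
Proof. by apply/matrixP=> i j; rewrite !mxE rmorphM. Qed.

Lemma adjmx1 n : adjmx (1%:M : 'M[C]_n) = 1%:M.
Proof. by rewrite /adjmx map_mx1 trmx1. Qed.

Section Unitary.
Variables (n : nat) (V : 'M[C]_n).
Hypothesis V_unitary : V \is unitarymx.

Lemma unitary_mulmxV : V *m adjmx V = 1%:M.
Proof. by move/unitarymxP: V_unitary; rewrite adjmxE. Qed.

Lemma unitary_mulVmx : adjmx V *m V = 1%:M.
Proof.
by rewrite adjmxE -invmx_unitary // mulVmx // unitarymx_unit.
Qed.

Lemma conj_unitaryM (P Q : 'M[C]_n) :
  (adjmx V *m P *m V) *m (adjmx V *m Q *m V) = adjmx V *m (P *m Q) *m V.
Proof.
rewrite -!mulmxA; congr (_ *m (_ *m _)).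
by rewrite mulmxA unitary_mulmxV mul1mx.
Qed.

Lemma conj_unitaryK (D : 'M[C]_n) : adjmx V *m (V *m D *m adjmx V) *m V = D.
Proof. by rewrite !mulmxA unitary_mulVmx mul1mx -mulmxA unitary_mulVmx mulmx1. Qed.

Lemma conj_unitaryVK (Z : 'M[C]_n) : V *m (adjmx V *m Z *m V) *m adjmx V = Z.
Proof. by rewrite !mulmxA unitary_mulmxV mul1mx -mulmxA unitary_mulmxV mulmx1. Qed.

Lemma mxtrace_conj_unitary (M N : 'M[C]_n) :
  \tr (adjmx (adjmx V *m M *m V) *m (adjmx V *m N *m V)) = \tr (adjmx M *m N).
Proof.
rewrite !adjmxM adjmxK [adjmx V *m (adjmx M *m V)]mulmxA conj_unitaryM.
by rewrite mxtrace_mulC (mulmxA V) unitary_mulmxV mul1mx.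
Qed.

End Unitary.

Lemma conj_diag_entry n (V A : 'M[C]_n) j :
  (V *m A *m adjmx V) j j = (row j V *m A *m adjmx (row j V)) 0 0.
Proof.
rewrite !mxE; apply: eq_bigr => k _; rewrite !mxE; congr (_ * _).
by apply: eq_bigr => l _; rewrite !mxE.
Qed.

End UnitaryConjugation.

Section Eigenvalues.
Variable R : realType.
Local Notation C := (R[i]).

Definition psd n (A : 'M[C]_n) : Prop :=
  forall v : 'rV[C]_n, 0 <= (v *m A *m adjmx v) 0 0.

Lemma eigU_spectral n (A : 'M[C]_n) : adjmx A = A ->
  A = adjmx (eigU A) *m diag_mx (spectral_diag A) *m eigU A.
Proof.
move=> hA; have A_normal : A \is normalmx by apply/normalmxP; rewrite -adjmxE hA.
rewrite /eigU adjmxE -invmx_unitary ?spectral_unitarymx //.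
exact: orthomx_spectralP.
Qed.

Lemma unitary_diagonalize n (V A : 'M[C]_n) s : V \is unitarymx ->
  A = adjmx V *m diag_mx s *m V -> V *m A *m adjmx V = diag_mx s.
Proof. by move=> Vu ->; rewrite conj_unitaryVK. Qed.

Lemma eigval_ge n (A : 'M[C]_n) (c : R) j : adjmx A = A ->
  psd (A - (c%:C)%:M) -> spectral_diag A 0 j = (eigval A j)%:C /\ c <= eigval A j.
Proof.
move=> hA A_ge_c; have Vu := spectral_unitarymx A.
have E : eigU A *m A *m adjmx (eigU A) =
    eigU A *m (A - (c%:C)%:M) *m adjmx (eigU A) + (c%:C)%:M.
  by rewrite mulmxBr mulmxBl mul_mx_scalar -scalemxAl unitary_mulmxV // scalemx1 subrK.
have ejj : spectral_diag A 0 j = (eigU A *m A *m adjmx (eigU A)) j j.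
  by rewrite (unitary_diagonalize Vu (eigU_spectral hA)) mxE eqxx mulr1n.
have quad := A_ge_c (row j (eigU A)); rewrite -conj_diag_entry in quad.
rewrite /eigval ejj E mxE [X in _ + X]mxE eqxx mulr1n.
move: quad; case: (_ j j) => a b; rewrite lecE /= => /andP[/eqP -> a_ge0].
split; last by rewrite lerDr.
by apply/eqP; rewrite eq_complex /= addr0 !eqxx.
Qed.

Lemma eigval_psd n (A : 'M[C]_n) j : adjmx A = A -> psd A ->
  spectral_diag A 0 j = (eigval A j)%:C /\ 0 <= eigval A j.
Proof.
move=> hA A_psd; apply: eigval_ge => // v.
have -> : ((0 : R)%:C)%:M = 0 :> 'M[C]_n by rewrite raddf0.
by rewrite subr0.
Qed.

End Eigenvalues.

Section FisherForm.
Variable R : realType.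
Local Notation C := (R[i]).

Lemma sqr_Re_normc (z : C) :
  (complex.Re `|z|) ^+ 2 = complex.Re z ^+ 2 + complex.Im z ^+ 2.
Proof. by rewrite normc_def /= sqr_sqrtr ?addr_ge0 ?sqr_ge0. Qed.

Lemma sqr_Re_normcE (z : C) : ((complex.Re `|z|) ^+ 2)%:C = z * z^*.
Proof.
by rewrite normc_def /= sqr_sqrtr ?addr_ge0 ?sqr_ge0 // add_Re2_Im2 sqr_normc.
Qed.

Definition fisher_form n (M : 'M[C]_n) (l : 'I_n -> R) : R :=
  \sum_j \sum_k (complex.Re `|M j k|) ^+ 2 / (l j + l k).

Section Lyapunov.
Variables (n : nat) (A V : 'M[C]_n) (s : 'rV[C]_n).
Hypothesis V_unitary : V \is unitarymx.
Hypothesis A_spectral : A = adjmx V *m diag_mx s *m V.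
Hypothesis s_sum_neq0 : forall j k, s 0 j + s 0 k != 0.

Definition lyap_sol (D : 'M[C]_n) : 'M[C]_n :=
  adjmx V *m (\matrix_(j, k) ((V *m D *m adjmx V) j k / (s 0 j + s 0 k))) *m V.

Lemma lyap_solP D : A *m lyap_sol D + lyap_sol D *m A = D.
Proof.
rewrite A_spectral /lyap_sol !conj_unitaryM // -mulmxDl -mulmxDr.
set L := \matrix_(j, k) _.
suff -> : diag_mx s *m L + L *m diag_mx s = V *m D *m adjmx V.
  exact: conj_unitaryK.
apply/matrixP => j k; rewrite mxE mul_diag_mx mul_mx_diag !mxE.
by rewrite [s 0 j * _]mulrC -mulrDr divfK.
Qed.

Lemma lyap_uniq X : A *m X + X *m A = 0 -> X = 0.
Proof.
move=> AX0; set Y := V *m X *m adjmx V.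
have EX : X = adjmx V *m Y *m V by rewrite /Y conj_unitaryK.
have Y0 : diag_mx s *m Y + Y *m diag_mx s = 0.
  move: AX0; rewrite A_spectral EX !conj_unitaryM // -mulmxDl -mulmxDr => AX0.
  by rewrite -(conj_unitaryVK V_unitary (_ + _)) AX0 mulmx0 mul0mx.
suff Y_eq0 : Y = 0 by rewrite EX Y_eq0 mulmx0 mul0mx.
apply/matrixP => j k; have /matrixP /(_ j k) := Y0.
rewrite mxE mul_diag_mx mul_mx_diag !mxE => /eqP.
by rewrite mulrC -mulrDr mulf_eq0 (negbTE (s_sum_neq0 _ _)) orbF => /eqP ->.
Qed.

Lemma mxtrace_lyap_sol D : \tr (adjmx D *m lyap_sol D) =
  \sum_j \sum_k ((V *m D *m adjmx V) k j)^* * (V *m D *m adjmx V) k j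
     / (s 0 k + s 0 j).
Proof.
set M := V *m D *m adjmx V.
have ED : D = adjmx V *m M *m V by rewrite /M conj_unitaryK.
rewrite {1}ED /lyap_sol mxtrace_conj_unitary // /mxtrace.
apply: eq_bigr => j _; rewrite !mxE; apply: eq_bigr => k _.
by rewrite !mxE mulrA.
Qed.

End Lyapunov.

(** The Fisher form as a complex sum, in the shape of [mxtrace_lyap_sol]. *)
Lemma fisher_formE n (M : 'M[C]_n) (s : 'rV[C]_n) (l : 'I_n -> R) :
  (forall j, s 0 j = (l j)%:C) ->
  (fisher_form M l)%:C = \sum_j \sum_k (M k j)^* * M k j / (s 0 k + s 0 j).
Proof.
move=> sE; rewrite /fisher_form rmorph_sum [RHS]exchange_big.
apply: eq_bigr => j _; rewrite rmorph_sum; apply: eq_bigr => k _.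
rewrite fmorph_div rmorphD !sE; congr (_ / _); by rewrite mulrC -sqr_Re_normcE.
Qed.

(** For a positive definite [A], the Fisher form does not depend on the
    eigenbasis used to compute it: both values equal [tr (D^* L)] where [L]
    is the unique solution of [A L + L A = D]. *)
Lemma fisher_form_basis_invariant n (A D V W : 'M[C]_n) (s w : 'rV[C]_n)
    (l m : 'I_n -> R) :
  V \is unitarymx -> W \is unitarymx ->
  A = adjmx V *m diag_mx s *m V -> A = adjmx W *m diag_mx w *m W ->
  (forall j, s 0 j = (l j)%:C) -> (forall j, w 0 j = (m j)%:C) ->
  (forall j, 0 < l j) -> (forall j, 0 < m j) ->
  fisher_form (V *m D *m adjmx V) l = fisher_form (W *m D *m adjmx W) m.
Proof.
move=> Vu Wu AV AW sE wE l_gt0 m_gt0.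
have pos_sum_neq0 (u : 'rV[C]_n) (p : 'I_n -> R) :
    (forall j, u 0 j = (p j)%:C) -> (forall j, 0 < p j) ->
    forall j k, u 0 j + u 0 k != 0.
  move=> uE p_gt0 j k; rewrite !uE -rmorphD /= eq_complex /= eqxx andbT.
  by rewrite gt_eqF // addr_gt0.
have sP := pos_sum_neq0 _ _ sE l_gt0; have wP := pos_sum_neq0 _ _ wE m_gt0.
apply: (@complexI R); rewrite (fisher_formE _ sE) (fisher_formE _ wE).
rewrite -(mxtrace_lyap_sol _ Vu) -(mxtrace_lyap_sol _ Wu).
suff -> : lyap_sol V s D = lyap_sol W w D by [].
apply/eqP; rewrite -subr_eq0; apply/eqP; apply: (lyap_uniq Vu AV sP).
rewrite mulmxBr mulmxBl addrACA -opprD.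
by rewrite (lyap_solP Vu AV sP) (lyap_solP Wu AW wP) subrr.
Qed.

End FisherForm.

Section SLDFisher.
Variable R : realType.
Local Notation C := (R[i]).

Definition eigbasis_mx n (A D : 'M[C]_n) : 'M[C]_n := eigU A *m D *m adjmx (eigU A).

Definition fisher_weight n (A D : 'M[C]_n) (j k : 'I_n) : R :=
  (complex.Re `|eigbasis_mx A D j k|) ^+ 2.

Lemma fisher_weight_ge0 n (A D : 'M[C]_n) j k : 0 <= fisher_weight A D j k.
Proof. exact: sqr_ge0. Qed.

Lemma ker_projP n (A D : 'M[C]_n) :
  (ker_proj A *m D *m ker_proj A == 0) <->
  (forall j k, eigval A j = 0 -> eigval A k = 0 -> eigbasis_mx A D j k = 0).
Proof.
have Vu := spectral_unitarymx A.
set V := eigU A; set M := eigbasis_mx A D.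
set P := diag_mx (\row_j ((eigval A j == 0)%:R : C)).
have -> : ker_proj A *m D *m ker_proj A = adjmx V *m (P *m M *m P) *m V.
  by rewrite /ker_proj -/V -/P -[D](conj_unitaryK Vu) !conj_unitaryM.
have PMP jk : (P *m M *m P) jk.1 jk.2 =
    (eigval A jk.1 == 0)%:R * M jk.1 jk.2 * (eigval A jk.2 == 0)%:R.
  by rewrite mul_mx_diag mxE mul_diag_mx !mxE.
split=> [/eqP PDP0 j k Aj0 Ak0 | M0].
  have := PMP (j, k); rewrite /= Aj0 Ak0 eqxx mulr1 mul1r => <-.
  by rewrite -(conj_unitaryVK Vu (P *m M *m P)) PDP0 mulmx0 mul0mx mxE.
apply/eqP; suff -> : P *m M *m P = 0 by rewrite mulmx0 mul0mx.
apply/matrixP => j k; rewrite (PMP (j, k)) [RHS]mxE /=.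
case: (eqVneq (eigval A j) 0) => [Aj|_]; last by rewrite !mul0r.
case: (eqVneq (eigval A k) 0) => [Ak|_]; last by rewrite mulr0.
by rewrite (M0 j k Aj Ak) mulr0 mul0r.
Qed.

Lemma SLD_fisher_posdef n (A D : 'M[C]_n) : (forall j, 0 < eigval A j) ->
  SLD_fisher A D = (2 * fisher_form (eigbasis_mx A D) (eigval A))%:E.
Proof.
move=> A_pos; rewrite /SLD_fisher /=.
have -> : ker_proj A = 0.
  rewrite /ker_proj; suff -> : \row_j ((eigval A j == 0)%:R : C) = 0.
    by rewrite raddf0 mulmx0 mul0mx.
  by apply/matrixP => i j; rewrite !mxE (gt_eqF (A_pos j)).
rewrite !mul0mx eqxx; congr ((2 * _)%:E).
by apply: eq_bigr => j _; apply: eq_bigl => k; rewrite addr_gt0.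
Qed.

End SLDFisher.

Section Depolarization.
Variable R : realType.
Local Notation C := (R[i]).

Section DepolarizedState.
Variables (n : nat) (eps : R) (A : 'M[C]_n).
Hypothesis A_hermitian : adjmx A = A.

Lemma depolarize_spectral : depolarize eps A = adjmx (eigU A) *m
  diag_mx (\row_j (Complex (1 - eps) 0 * spectral_diag A 0 j
                   + Complex (eps / n%:R) 0)) *m eigU A.
Proof.
set a := Complex (1 - eps) 0; set b := Complex (eps / n%:R) 0.
have -> : diag_mx (\row_j (a * spectral_diag A 0 j + b))
          = a *: diag_mx (spectral_diag A) + b%:M.
  apply/matrixP => i k; rewrite !mxE; case: eqP => [->|_]; rewrite ?mulr1n //.
  by rewrite !mulr0n mulr0 addr0.
have Vu := spectral_unitarymx A.
rewrite mulmxDr mulmxDl -scalemxAr -scalemxAl -(eigU_spectral A_hermitian).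
by rewrite mul_mx_scalar -scalemxAl unitary_mulVmx // scalemx1 /depolarize scalemx1.
Qed.

Lemma depolarize_hermitian : adjmx (depolarize eps A) = depolarize eps A.
Proof.
rewrite /depolarize adjmxD !adjmxZ adjmx1 A_hermitian.
by congr (_ *: _ + _ *: _); apply/eqP; rewrite eq_complex /= oppr0 !eqxx.
Qed.

Lemma depolarize_ge : eps <= 1 -> psd A ->
  psd (depolarize eps A - ((eps / n%:R)%:C)%:M).
Proof.
move=> eps_le1 A_psd v; rewrite /depolarize scalemx1 addrK -scalemxAr -scalemxAl mxE.
by apply: mulr_ge0 (A_psd v); rewrite lecE /= eqxx /= subr_ge0.
Qed.

End DepolarizedState.

Lemma derive1_affine (f : R -> R) (a b t : R) : derivable f t 1 ->
  derive1 (fun s => a * f s + b) t = a * derive1 f t.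
Proof.
move=> f_derivable; rewrite !derive1E.
have -> : (fun s => a * f s + b) = (a \*: f) + cst b by apply/funext.
by rewrite deriveD ?deriveZ ?derive_cst ?addr0 //; exact: derivableZ.
Qed.

Lemma mx_derive_depolarize n eps (rho : R -> 'M[C]_n) t : mx_derivable rho t ->
  mx_derive (fun s => depolarize eps (rho s)) t
  = Complex (1 - eps) 0 *: mx_derive rho t.
Proof.
move=> rho_derivable; apply/matrixP => i j; rewrite !mxE.
have depolE s : depolarize eps (rho s) i j =
    Complex (1 - eps) 0 * rho s i j + Complex (eps / n%:R) 0 * (i == j)%:R.
  by rewrite /depolarize !mxE.
have ReE : (fun s => complex.Re (depolarize eps (rho s) i j)) =
  (fun s => (1 - eps) * complex.Re (rho s i j) +
            eps / n%:R * complex.Re ((i == j)%:R : C)).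
  apply/funext => s; rewrite depolE.
  by case: (rho s i j) => x y; case: ((i == j)%:R : C) => u v /=; ring.
have ImE : (fun s => complex.Im (depolarize eps (rho s) i j)) =
  (fun s => (1 - eps) * complex.Im (rho s i j) +
            eps / n%:R * complex.Im ((i == j)%:R : C)).
  apply/funext => s; rewrite depolE.
  by case: (rho s i j) => x y; case: ((i == j)%:R : C) => u v /=; ring.
rewrite ReE ImE !derive1_affine; [|exact: (rho_derivable i j).2|exact: (rho_derivable i j).1].
by apply/eqP; rewrite eq_complex /= mul0r subr0 mul0r addr0 !eqxx.
Qed.

Definition depol_fisher_sum n (lam : 'I_n -> R) (c : 'I_n -> 'I_n -> R) (e : R) : R :=
  2 * \sum_j \sum_k (1 - e) ^+ 2 * c j k /
      (((1 - e) * lam j + e / n%:R) + ((1 - e) * lam k + e / n%:R)).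

(** For [0 < eps < 1] the depolarized state is positive definite, with the
    eigenbasis of [rho]; by basis invariance of the Fisher form its SLD Fisher
    information is the explicit sum [depol_fisher_sum]. *)
Lemma SLD_fisher_depolarize n (rho D : 'M[C]_n) eps : adjmx rho = rho -> psd rho ->
  0 < eps < 1 -> (0 < n)%N ->
  SLD_fisher (depolarize eps rho) (Complex (1 - eps) 0 *: D) =
  (depol_fisher_sum (eigval rho) (fisher_weight rho D) eps)%:E.
Proof.
move=> rho_herm rho_psd /andP[eps_gt0 eps_lt1] n_gt0.
set A := depolarize eps rho.
have A_herm : adjmx A = A := depolarize_hermitian eps rho_herm.
have c_gt0 : 0 < eps / n%:R by rewrite divr_gt0 // ltr0n.
have A_eig j := eigval_ge j A_herm (depolarize_ge (ltW eps_lt1) rho_psd).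
have A_pos j : 0 < eigval A j := lt_le_trans c_gt0 (A_eig j).2.
have rho_eig j := eigval_psd j rho_herm rho_psd.
set mu := fun j => (1 - eps) * eigval rho j + eps / n%:R.
have mu_pos j : 0 < mu j.
  apply: (lt_le_trans c_gt0); rewrite /mu lerDr; apply: mulr_ge0 (rho_eig j).2.
  by rewrite subr_ge0 ltW.
set w := \row_j (Complex (1 - eps) 0 * spectral_diag rho 0 j
                 + Complex (eps / n%:R) 0).
have wE j : w 0 j = (mu j)%:C.
  rewrite mxE (rho_eig j).1; apply/eqP; rewrite eq_complex /= /mu.
  by apply/andP; split; apply/eqP; ring.
rewrite SLD_fisher_posdef //; congr ((2 * _)%:E).
rewrite /eigbasis_mx (fisher_form_basis_invariant _ (spectral_unitarymx A)
  (spectral_unitarymx rho) (eigU_spectral A_herm) (depolarize_spectral eps rho_herm)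
  (fun j => (A_eig j).1) wE A_pos mu_pos).
rewrite -scalemxAr -scalemxAl /fisher_form.
apply: eq_bigr => j _; apply: eq_bigr => k _.
rewrite mxE /fisher_weight !sqr_Re_normc.
by case: (_ j k) => x y /=; congr (_ / _); ring.
Qed.

End Depolarization.

Section DepolarizationLimit.
Variable R : realType.
Local Open Scope classical_set_scope.

Lemma cvg_sum_at_right (I : finType) (f : I -> R -> R) (L : I -> R) :
  (forall i, f i e @[e --> (0:R)^'+] --> L i) ->
  (\sum_i f i e) @[e --> (0:R)^'+] --> \sum_i L i.
Proof. by move=> f_cvg; apply: (@cvg_big _ _ +%R 0 xpredT add_continuous). Qed.

Lemma depol_term_cvg (a b c k : R) : a + b != 0 ->
  (1 - e) ^+ 2 * c / (((1 - e) * a + e / k) + ((1 - e) * b + e / k))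
     @[e --> 0^'+] --> c / (a + b).
Proof.
move=> ab_neq0; apply: cvg_at_right_filter.
have one_sub : (fun e : R => 1 - e) @ (0:R) --> (1 : R).
  by rewrite -[X in _ --> X]subr0; apply: cvgB; [exact: cvg_cst | exact: cvg_id].
have num : ((fun e => 1 - e) \* (fun e => 1 - e) \* cst c) @ (0:R) --> 1 * 1 * c.
  by apply: cvgM; [apply: cvgM | exact: cvg_cst].
have den : ((fun e => 1 - e) \* cst a + (fun e => e) \* cst k^-1 +
    ((fun e => 1 - e) \* cst b + (fun e => e) \* cst k^-1)) @ (0:R) -->
    (1 * a + 0 * k^-1 + (1 * b + 0 * k^-1)).
  by apply: cvgD; apply: cvgD; apply: cvgM => //; exact: cvg_cst.
rewrite !mul1r !mul0r !addr0 in num den.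
under eq_cvg do rewrite expr2.
exact: (cvgM num (cvgV ab_neq0 den)).
Qed.

Lemma depol_fisher_sum_cvg_fin n (lam : 'I_n -> R) (c : 'I_n -> 'I_n -> R) :
  (forall j, 0 <= lam j) -> (forall j k, lam j + lam k = 0 -> c j k = 0) ->
  depol_fisher_sum lam c e @[e --> (0:R)^'+] -->
  2 * \sum_j \sum_(k | 0 < lam j + lam k) c j k / (lam j + lam k).
Proof.
move=> lam_ge0 c_ker.
under eq_bigr do rewrite big_mkcond /=.
apply: cvgMl_tmp; apply: cvg_sum_at_right => j; apply: cvg_sum_at_right => k.
have lam_jk_ge0 : 0 <= lam j + lam k by rewrite addr_ge0.
case: ifPn => [lam_jk_gt0 | ]; first by apply: depol_term_cvg; rewrite gt_eqF.
rewrite -leNgt => lam_jk_le0.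
have -> : c j k = 0 by apply: c_ker; apply/eqP; rewrite eq_le lam_jk_le0.
by under eq_cvg do rewrite mulr0 mul0r; exact: cvg_cst.
Qed.

Lemma sum_ge_term n (F : 'I_n -> 'I_n -> R) j0 k0 :
  (forall j k, 0 <= F j k) -> F j0 k0 <= \sum_j \sum_k F j k.
Proof.
move=> F_ge0; rewrite (bigD1 j0) //= (bigD1 k0) //= -addrA lerDl.
by apply: addr_ge0; apply: sumr_ge0 => i _ //; apply: sumr_ge0.
Qed.

Lemma depol_fisher_sum_ge n (lam : 'I_n -> R) (c : 'I_n -> 'I_n -> R) j0 k0 e :
  (0 < n)%N -> (forall j, 0 <= lam j) -> (forall j k, 0 <= c j k) ->
  lam j0 = 0 -> lam k0 = 0 -> 0 < e < 1 ->
  (1 - e) ^+ 2 * (c j0 k0 * n%:R) / e <= depol_fisher_sum lam c e.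
Proof.
move=> n_gt0 lam_ge0 c_ge0 lam_j0 lam_k0 /andP[e_gt0 e_lt1].
have n_pos : 0 < (n%:R : R) by rewrite ltr0n.
have en_ge0 : 0 <= e / n%:R by rewrite divr_ge0 // ltW.
have term_ge0 j k : 0 <= (1 - e) ^+ 2 * c j k /
      (((1 - e) * lam j + e / n%:R) + ((1 - e) * lam k + e / n%:R)).
  apply: divr_ge0; first by rewrite mulr_ge0 ?sqr_ge0.
  have : 0 <= 1 - e by rewrite subr_ge0 ltW.
  by move=> e1; rewrite addr_ge0 // addr_ge0 // mulr_ge0.
rewrite /depol_fisher_sum.
apply: le_trans (ler_wpM2l _ (sum_ge_term j0 k0 term_ge0)) => //.
rewrite lam_j0 lam_k0 !mulr0 !add0r le_eqVlt; apply/orP; left; apply/eqP.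
by field; rewrite !gt_eqF ?addr_gt0.
Qed.

Lemma depol_fisher_sum_cvgy n (lam : 'I_n -> R) (c : 'I_n -> 'I_n -> R) j0 k0 :
  (0 < n)%N -> (forall j, 0 <= lam j) -> (forall j k, 0 <= c j k) ->
  lam j0 = 0 -> lam k0 = 0 -> 0 < c j0 k0 ->
  (depol_fisher_sum lam c e)%:E @[e --> (0:R)^'+] --> +oo%E.
Proof.
move=> n_gt0 lam_ge0 c_ge0 lam_j0 lam_k0 c_gt0; apply/cvgeyPge => A.
set K := c j0 k0 * n%:R.
have K_gt0 : 0 < K by rewrite mulr_gt0 // ltr0n.
have eps0_gt0 : 0 < K / (4 * (`|A| + 1)) by rewrite divr_gt0 // mulr_gt0 // ltr_pwDr.
near=> e.
have e_gt0 : 0 < e by near: e; exact: nbhs_right_gt.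
have e_lt_half : e < 1/2 by near: e; apply: nbhs_right_lt; lra.
have e_small : e < K / (4 * (`|A| + 1)) by near: e; exact: nbhs_right_lt.
have e_in : 0 < e < 1 by apply/andP; split=> //; lra.
rewrite lee_fin; apply: le_trans (depol_fisher_sum_ge n_gt0 lam_ge0 c_ge0 lam_j0 lam_k0 e_in).
have quarter : K / 4 <= (1 - e) ^+ 2 * K.
  have : 1 / 4 <= (1 - e) ^+ 2 by nra.
  by nra.
rewrite ler_pdivlMr //; apply: le_trans quarter.
have : 4 * (`|A| + 1) * e < K by rewrite mulrC -ltr_pdivlMr // mulr_gt0 // ltr_pwDr.
have : A <= `|A| by exact: ler_norm.
nra.
Unshelve. all: by end_near.
Qed.

End DepolarizationLimit.

Section MainResult.
Variable R : realType.
Local Notation C := (R[i]).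
Local Open Scope classical_set_scope.

Lemma Re_normc_gt0 (z : C) : z != 0 -> 0 < complex.Re `|z|.
Proof. by rewrite -normr_gt0 ltcE => /andP[]. Qed.

Lemma density_op_dim_gt0 n (r : 'M[C]_n) : density_op r -> (0 < n)%N.
Proof.
case=> _ _; rewrite lt0n; case: n r => // r.
by rewrite /mxtrace big_ord0 => /eqP; rewrite eq_sym oner_eq0.
Qed.

Lemma depol_fisher_sum_cvg n (r D : 'M[C]_n) :
  (0 < n)%N -> adjmx r = r -> psd r ->
  (depol_fisher_sum (eigval r) (fisher_weight r D) e)%:E @[e --> (0:R)^'+]
    --> SLD_fisher r D.
Proof.
move=> n_gt0 r_herm r_psd.
have lam_ge0 j : 0 <= eigval r j := (eigval_psd j r_herm r_psd).2.
rewrite /SLD_fisher /=; case: ifPn => [ker0 | ker_neq0].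
  apply: cvg_EFin; first by near=> e.
  apply: depol_fisher_sum_cvg_fin => // j k lam_jk0.
  have lam_j0 : eigval r j = 0.
    by apply/eqP; rewrite eq_le lam_ge0 andbT -lam_jk0 lerDl.
  have lam_k0 : eigval r k = 0 by move: lam_jk0; rewrite lam_j0 add0r.
  by rewrite /fisher_weight ((ker_projP r D).1 ker0 j k lam_j0 lam_k0) normr0 /= expr2 mul0r.
have [j0 [k0 [lam_j0 lam_k0 M_neq0]]] : exists j0 k0,
    [/\ eigval r j0 = 0, eigval r k0 = 0 & eigbasis_mx r D j0 k0 != 0].
  move: ker_neq0; apply: contraNP => no_pair; apply/(ker_projP r D) => j k lam_j0 lam_k0.
  by apply/eqP; apply: contra_notT no_pair => M_neq0; exists j, k.
apply: (depol_fisher_sum_cvgy n_gt0 lam_ge0 (@fisher_weight_ge0 _ _ r D) lam_j0 lam_k0).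
by rewrite exprn_gt0 // Re_normc_gt0.
Unshelve. all: by end_near.
Qed.

End MainResult.

Unset Implicit Arguments.
Local Open Scope classical_set_scope.

Theorem mainTheorem1 (R : realType) (d : nat) (Theta : set R)
    (rho : R -> 'M[R[i]]_d) (theta : R) :
  open Theta ->
  (forall t, Theta t -> density_op (rho t)) ->
  (forall t, Theta t -> mx_derivable rho t) ->
  Theta theta ->
  fisher_info (fun t => depolarize eps (rho t)) theta @[eps --> 0^'+]
    --> fisher_info rho theta.
Proof.
move=> _ rho_density rho_derivable theta_in.
have [r_herm r_psd _] := rho_density theta theta_in.
have d_gt0 := density_op_dim_gt0 (rho_density theta theta_in).
apply: cvg_trans (depol_fisher_sum_cvg (D := mx_derive rho theta) d_gt0 r_herm r_psd).
apply: near_eq_cvg; near=> e.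
have e_gt0 : 0 < e by near: e; exact: nbhs_right_gt.
have e_lt1 : e < 1 by near: e; apply: nbhs_right_lt; exact: ltr01.
rewrite /fisher_info mx_derive_depolarize ?SLD_fisher_depolarize ?e_gt0 //.
exact: rho_derivable.
Unshelve. all: by end_near.
Qed.
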